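(* Let $\Omega\subset\mathbb{R}^2$ be an open, bounded domain and let $\tau_h=\{\Omega^{(k)}\}_k$ be a quadtree partition of $\Omega$. Let $u\in\mathbb{P}_{2,2}(\Omega)$ be a bi-quadratic polynomial, i.e. $u(x,y)=\sum_{0\le i\le 2,\,0\le j\le 2}a_{ij}x^iy^j$. Let $\Pi_h^1u\in\tilde Q_h^1$ be the bi-linear interpolant of $u$, and let $\boldsymbol{\sigma}_h^*$ be obtained by applying the gradient recovery procedure described below to $u_h=\Pi_h^1u$. Then $\boldsymbol{\sigma}_h^*(x_i,y_j)=\nabla u(x_i,y_j)$ at every vertex $(x_i,y_j)$ of the partition.
   Context: A quadtree partition of a rectangular (Cartesian) domain is obtained from a Cartesian-product mesh (tensor product of 1D partitions of the $x$- and $y$-sides) by repeatedly replacing a rectangular cell by its four children (obtained by halving its edges) or four children by their parent, with neighbouring cells differing by at most one refinement level (2:1 balance); nodes lying in the interior of an edge of a neighbouring coarser cell are called hanging nodes. $\tilde Q_h^1$ denotes the space of continuous functions that are bi-linear (in $\mathbb{P}_{1,1}$) on each cell, where the value at each hanging node is constrained to be the arithmetic mean of the values at the two endpoints of the coarse edge containing it; its degrees of freedom are the values at the non-hanging vertices, and $\Pi_h^1u$ is the element of $\tilde Q_h^1$ coinciding with $u$ at these vertices. Discrete gradient on edges: for a mesh edge $s_{x,i}=[x_{i-1},x_i]\times\{y_j\}$ oriented along $x$ with length $h_{x,i}=x_i-x_{i-1}$, set $\boldsymbol{\sigma}_h(s_{x,i})=\big((u_h(x_i,y_j)-u_h(x_{i-1},y_j))/h_{x,i},\,0\big)^T$;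 for a mesh edge $s_{y,j}=\{x_i\}\times[y_{j-1},y_j]$ with length $h_{y,j}=y_j-y_{j-1}$, set $\boldsymbol{\sigma}_h(s_{y,j})=\big(0,\,(u_h(x_i,y_j)-u_h(x_i,y_{j-1}))/h_{y,j}\big)^T$. Gradient recovery: at an internal vertex $(x_i,y_j)$, with $s_{x,i},s_{x,i+1}$ the mesh edges along $x$ to the left and right of the vertex and $s_{y,j},s_{y,j+1}$ the mesh edges along $y$ below and above it, $$\boldsymbol{\sigma}_h^*(x_i,y_j)=\frac{1}{\frac{1}{h_{x,i}}+\frac{1}{h_{x,i+1}}}\Big(\frac{\boldsymbol{\sigma}_h(s_{x,i})}{h_{x,i}}+\frac{\boldsymbol{\sigma}_h(s_{x,i+1})}{h_{x,i+1}}\Big)+\frac{1}{\frac{1}{h_{y,j}}+\frac{1}{h_{y,j+1}}}\Big(\frac{\boldsymbol{\sigma}_h(s_{y,j})}{h_{y,j}}+\frac{\boldsymbol{\sigma}_h(s_{y,j+1})}{h_{y,j+1}}\Big).$$ At a boundary vertex, in each direction in which edges exist on one side only, the corresponding term is replaced by a one-sided formula; e.g. for a vertex on the bottom boundary, with $s_{y,j+1},s_{y,j+2}$ the two consecutive mesh edges above the vertex, the $y$-term is replaced by $$\frac{1}{\frac{1}{h_{y,j+1}}+\frac{1}{h_{y,j+2}}}\Big[\boldsymbol{\sigma}_h(s_{y,j+1})\Big(\frac{1}{h_{y,j+1}}+\frac{2}{h_{y,j+2}}\Big)-\frac{\boldsymbol{\sigma}_h(s_{y,j+2})}{h_{y,j+2}}\Big],$$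 and analogously for the other boundary sides. The recovered gradient $\boldsymbol{\sigma}_h^*\in[\tilde Q_h^1]^2$ is defined by these vertex values. *)

From HB Require Import structures.
From mathcomp Require Import all_boot all_order all_algebra.
Set Implicit Arguments. Unset Strict Implicit. Unset Printing Implicit Defensive.
Import Order.TTheory GRing.Theory Num.Theory.
Local Open Scope ring_scope.

(* A quadtree over one cell of the initial Cartesian-product mesh:
   a leaf, or a cell split into its four children (SW, SE, NW, NE). *)
Inductive qtree : Type :=
  | QLeaf : qtree
  | QNode : qtree -> qtree -> qtree -> qtree -> qtree.

Section Quadtree.
Variable R : realFieldType.

Definition rect := ((R * R) * (R * R))%type.
Definition cx0 (K : rect) := K.1.1.
Definition cx1 (K : rect) := K.1.2.
Definition cy0 (K : rect) := K.2.1.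
Definition cy1 (K : rect) := K.2.2.

Fixpoint leaves (t : qtree) (K : rect) (l : nat) : seq (rect * nat) :=
  match t with
  | QLeaf => [:: (K, l)]
  | QNode t1 t2 t3 t4 =>
      let xm := (cx0 K + cx1 K) / 2 in
      let ym := (cy0 K + cy1 K) / 2 in
      leaves t1 ((cx0 K, xm), (cy0 K, ym)) l.+1 ++
      leaves t2 ((xm, cx1 K), (cy0 K, ym)) l.+1 ++
      leaves t3 ((cx0 K, xm), (ym, cy1 K)) l.+1 ++
      leaves t4 ((xm, cx1 K), (ym, cy1 K)) l.+1
  end.

(* Cartesian-product mesh given by the 1D partitions mX, mY of the sides,
   and a quadtree refinement mT i j of each tensor cell
   [mX_i, mX_{i+1}] x [mY_j, mY_{j+1}] *)
Record qmesh := QMesh { mX : seq R; mY : seq R; mT : nat -> nat -> qtree }.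

Definition cells (M : qmesh) : seq (rect * nat) :=
  flatten [seq flatten [seq leaves (mT M i j)
                              (((mX M)`_i, (mX M)`_i.+1), ((mY M)`_j, (mY M)`_j.+1)) 0
                       | j <- iota 0 (size (mY M)).-1]
          | i <- iota 0 (size (mX M)).-1].

Definition is_cell (M : qmesh) (K : rect) (l : nat) : Prop := (K, l) \in cells M.

Definition well_formed (M : qmesh) : Prop :=
  (2 <= size (mX M))%N /\ sorted (fun a b : R => a < b) (mX M) /\
  (2 <= size (mY M))%N /\ sorted (fun a b : R => a < b) (mY M).

Definition adjacent (K K' : rect) : Prop :=
  ((cx1 K = cx0 K' \/ cx1 K' = cx0 K) /\
     Num.max (cy0 K) (cy0 K') < Num.min (cy1 K) (cy1 K')) \/
  ((cy1 K = cy0 K' \/ cy1 K' = cy0 K) /\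
     Num.max (cx0 K) (cx0 K') < Num.min (cx1 K) (cx1 K')).

Definition balanced (M : qmesh) : Prop :=
  forall K l K' l', is_cell M K l -> is_cell M K' l' -> adjacent K K' ->
    (l <= l'.+1)%N.

Definition quadtree_partition (M : qmesh) : Prop := well_formed M /\ balanced M.

Definition is_corner (K : rect) (v : R * R) : Prop :=
  v = (cx0 K, cy0 K) \/ v = (cx1 K, cy0 K) \/ v = (cx0 K, cy1 K) \/ v = (cx1 K, cy1 K).

Definition is_vertex (M : qmesh) (v : R * R) : Prop :=
  exists K l, is_cell M K l /\ is_corner K v.

Definition edge_int (K : rect) (a b v : R * R) : Prop :=
  (a = (cx0 K, cy0 K) /\ b = (cx1 K, cy0 K) /\ v.2 = cy0 K /\ cx0 K < v.1 < cx1 K) \/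
  (a = (cx0 K, cy1 K) /\ b = (cx1 K, cy1 K) /\ v.2 = cy1 K /\ cx0 K < v.1 < cx1 K) \/
  (a = (cx0 K, cy0 K) /\ b = (cx0 K, cy1 K) /\ v.1 = cx0 K /\ cy0 K < v.2 < cy1 K) \/
  (a = (cx1 K, cy0 K) /\ b = (cx1 K, cy1 K) /\ v.1 = cx1 K /\ cy0 K < v.2 < cy1 K).

Definition hanging (M : qmesh) (v : R * R) : Prop :=
  is_vertex M v /\ exists K l a b, is_cell M K l /\ edge_int K a b v.

Definition in_Qtilde (M : qmesh) (w : R * R -> R) : Prop :=
  (forall K l, is_cell M K l -> exists c0 c1 c2 c3 : R,
      forall x y, cx0 K <= x <= cx1 K -> cy0 K <= y <= cy1 K ->
        w (x, y) = c0 + c1 * x + c2 * y + c3 * x * y) /\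
  (forall v K l a b, hanging M v -> is_cell M K l -> edge_int K a b v ->
      w v = (w a + w b) / 2).

Definition interpolant (M : qmesh) (u w : R * R -> R) : Prop :=
  in_Qtilde M w /\ (forall v, is_vertex M v -> ~ hanging M v -> w v = u v).

Definition hedge (M : qmesh) (a b : R * R) : Prop :=
  (exists K l, is_cell M K l /\
     ((a = (cx0 K, cy0 K) /\ b = (cx1 K, cy0 K)) \/
      (a = (cx0 K, cy1 K) /\ b = (cx1 K, cy1 K)))) /\
  ~ hanging M a /\ ~ hanging M b.

Definition vedge (M : qmesh) (a b : R * R) : Prop :=
  (exists K l, is_cell M K l /\
     ((a = (cx0 K, cy0 K) /\ b = (cx0 K, cy1 K)) \/
      (a = (cx1 K, cy0 K) /\ b = (cx1 K, cy1 K)))) /\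
  ~ hanging M a /\ ~ hanging M b.

(* nonzero component of the discrete gradient sigma_h on the edge [a,b] *)
Definition sig_x (w : R * R -> R) (a b : R * R) : R := (w b - w a) / (b.1 - a.1).
Definition sig_y (w : R * R -> R) (a b : R * R) : R := (w b - w a) / (b.2 - a.2).

(* first component of the x-term of the recovery at v (its second component is 0) *)
Definition xterm (M : qmesh) (w : R * R -> R) (v : R * R) (t : R) : Prop :=
  (exists a b, hedge M a v /\ hedge M v b /\
     let h1 := v.1 - a.1 in let h2 := b.1 - v.1 in
     t = (1 / (1 / h1 + 1 / h2)) * (sig_x w a v / h1 + sig_x w v b / h2)) \/
  ((~ exists a, hedge M a v) /\ exists b c, hedge M v b /\ hedge M b c /\
     let h1 := b.1 - v.1 in let h2 := c.1 - b.1 in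
     t = (1 / (1 / h1 + 1 / h2)) *
           (sig_x w v b * (1 / h1 + 2 / h2) - sig_x w b c / h2)) \/
  ((~ exists b, hedge M v b) /\ exists a0 a, hedge M a0 a /\ hedge M a v /\
     let h1 := v.1 - a.1 in let h2 := a.1 - a0.1 in
     t = (1 / (1 / h1 + 1 / h2)) *
           (sig_x w a v * (1 / h1 + 2 / h2) - sig_x w a0 a / h2)).

(* second component of the y-term of the recovery at v (its first component is 0) *)
Definition yterm (M : qmesh) (w : R * R -> R) (v : R * R) (t : R) : Prop :=
  (exists a b, vedge M a v /\ vedge M v b /\
     let h1 := v.2 - a.2 in let h2 := b.2 - v.2 in
     t = (1 / (1 / h1 + 1 / h2)) * (sig_y w a v / h1 + sig_y w v b / h2)) \/
  ((~ exists a, vedge M a v) /\ exists b c, vedge M v b /\ vedge M b c /\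
     let h1 := b.2 - v.2 in let h2 := c.2 - b.2 in
     t = (1 / (1 / h1 + 1 / h2)) *
           (sig_y w v b * (1 / h1 + 2 / h2) - sig_y w b c / h2)) \/
  ((~ exists b, vedge M v b) /\ exists a0 a, vedge M a0 a /\ vedge M a v /\
     let h1 := v.2 - a.2 in let h2 := a.2 - a0.2 in
     t = (1 / (1 / h1 + 1 / h2)) *
           (sig_y w a v * (1 / h1 + 2 / h2) - sig_y w a0 a / h2)).

Definition recovered (M : qmesh) (w : R * R -> R) (v : R * R) (g : R * R) : Prop :=
  exists gx gy, xterm M w v gx /\ yterm M w v gy /\ g = (gx, gy).

Definition biquad (a : 'I_3 -> 'I_3 -> R) (v : R * R) : R :=
  \sum_(i < 3) \sum_(j < 3) a i j * v.1 ^+ i * v.2 ^+ j.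

Definition grad_biquad (a : 'I_3 -> 'I_3 -> R) (v : R * R) : R * R :=
  (\sum_(i < 3) \sum_(j < 3) a i j * (i%:R * v.1 ^+ i.-1) * v.2 ^+ j,
   \sum_(i < 3) \sum_(j < 3) a i j * v.1 ^+ i * (j%:R * v.2 ^+ j.-1)).

End Quadtree.

From HB Require Import structures.
From mathcomp Require Import all_boot all_order all_algebra.
From mathcomp Require Import ring zify.
Set Implicit Arguments. Unset Strict Implicit. Unset Printing Implicit Defensive.
Import Order.TTheory GRing.Theory Num.Theory.
Local Open Scope ring_scope.

(* Every mesh edge joins two degrees of freedom, where Pi_h^1 u agrees with u,
   so the recovery only sees u; along a horizontal (vertical) mesh line u is a
   quadratic polynomial of x (y) whose derivative is the corresponding partial
   derivative of u.  The chord slope of a quadratic over [s, t] is its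
   derivative at the midpoint, an affine function of (s + t) / 2; weighting the
   slopes of edges of length h by 1/h makes the offsets +-h/2 of the midpoints
   cancel, in the two-sided as well as in the one-sided formula.  Hence every
   formula returns the exact derivative. *)

Definition dquot (R : fieldType) (f : R -> R) (s t : R) : R :=
  (f t - f s) / (t - s).

Section QuadraticRecovery.
Variables (R : fieldType) (c0 c1 c2 : R).

Definition quad (t : R) : R := c0 + c1 * t + c2 * t ^+ 2.

Lemma dquot_quad s t : s != t -> dquot quad s t = c1 + c2 * (s + t).
Proof. by rewrite /dquot /quad => st; field; rewrite subr_eq0 eq_sym. Qed.

Lemma central_recovery_quad p x q : p != x -> x != q -> p != q ->
  1 / (1 / (x - p) + 1 / (q - x)) *
    (dquot quad p x / (x - p) + dquot quad x q / (q - x)) = c1 + 2 * c2 * x.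
Proof.
move=> px xq pq; rewrite !dquot_quad //; field.
by rewrite addrA subrK !subr_eq0; apply/and3P; split; rewrite eq_sym.
Qed.

Lemma forward_recovery_quad x q r : x != q -> q != r -> x != r ->
  1 / (1 / (q - x) + 1 / (r - q)) *
    (dquot quad x q * (1 / (q - x) + 2 / (r - q)) - dquot quad q r / (r - q))
  = c1 + 2 * c2 * x.
Proof.
move=> xq qr xr; rewrite !dquot_quad //; field.
by rewrite addrA subrK !subr_eq0; apply/and3P; split; rewrite eq_sym.
Qed.

Lemma backward_recovery_quad r p x : r != p -> p != x -> r != x ->
  1 / (1 / (x - p) + 1 / (p - r)) *
    (dquot quad p x * (1 / (x - p) + 2 / (p - r)) - dquot quad r p / (p - r))
  = c1 + 2 * c2 * x.
Proof.
move=> rp px rx; rewrite !dquot_quad //; field.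
rewrite (addrC (p - r)) addrA subrK !subr_eq0.
by apply/and3P; split; rewrite eq_sym.
Qed.

End QuadraticRecovery.

Section Biquadratic.
Variables (R : realFieldType) (A : 'I_3 -> 'I_3 -> R).

Lemma biquad_row y : exists c0 c1 c2 : R, forall x,
  biquad A (x, y) = quad c0 c1 c2 x /\
  (grad_biquad A (x, y)).1 = c1 + 2 * c2 * x.
Proof.
pose c i := \sum_(j < 3) A i j * y ^+ j.
exists (c ord0), (c (lift ord0 ord0)), (c (lift ord0 (lift ord0 ord0))) => x.
by rewrite /c /biquad /grad_biquad /quad /= !big_ord_recl !big_ord0 /= /bump /=;
  split; ring.
Qed.

Lemma biquad_col x : exists c0 c1 c2 : R, forall y,
  biquad A (x, y) = quad c0 c1 c2 y /\
  (grad_biquad A (x, y)).2 = c1 + 2 * c2 * y.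
Proof.
pose c j := \sum_(i < 3) A i j * x ^+ i.
exists (c ord0), (c (lift ord0 ord0)), (c (lift ord0 (lift ord0 ord0))) => y.
by rewrite /c /biquad /grad_biquad /quad /= !big_ord_recl !big_ord0 /= /bump /=;
  split; ring.
Qed.

End Biquadratic.

Section MeshEdges.
Variables (R : realFieldType) (M : qmesh R).
Hypothesis wfM : well_formed M.

Lemma leaves_proper (t : qtree) (K : rect R) l K' l' :
  cx0 K < cx1 K -> cy0 K < cy1 K -> (K', l') \in leaves t K l ->
  cx0 K' < cx1 K' /\ cy0 K' < cy1 K'.
Proof.
elim: t K l => [|t1 IH1 t2 IH2 t3 IH3 t4 IH4] K l hx hy /=.
  by rewrite mem_seq1 => /eqP [-> _].
have [hx1 hx2] := midf_lt hx; have [hy1 hy2] := midf_lt hy.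
by rewrite !mem_cat => /or4P [/IH1|/IH2|/IH3|/IH4]; apply.
Qed.

Lemma cell_proper K l : is_cell M K l -> cx0 K < cx1 K /\ cy0 K < cy1 K.
Proof.
have [sX [oX [sY oY]]] := wfM; rewrite /is_cell /cells.
case/flatten_mapP => i; rewrite mem_iota add0n => /andP [_ hi].
case/flatten_mapP => j; rewrite mem_iota add0n => /andP [_ hj].
by apply: leaves_proper; rewrite /cx0 /cx1 /cy0 /cy1 /=;
  apply: (sorted_ltn_nth lt_trans); rewrite ?inE //=; lia.
Qed.

Variables (A : 'I_3 -> 'I_3 -> R) (uh : R * R -> R).
Hypothesis uh_dof :
  forall v, is_vertex M v -> ~ hanging M v -> uh v = biquad A v.

Lemma hedge_interp p q : hedge M p q ->
  [/\ p.2 = q.2, p.1 < q.1, uh p = biquad A p & uh q = biquad A q].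
Proof.
move=> [[K [l [hK corner]]] [np nq]]; have [hx _] := cell_proper hK.
have vertK w : is_corner K w -> is_vertex M w by exists K, l.
by case: corner => -[ep eq]; subst p q; split=> //; apply: uh_dof => //;
  apply: vertK; rewrite /is_corner; tauto.
Qed.

Lemma vedge_interp p q : vedge M p q ->
  [/\ p.1 = q.1, p.2 < q.2, uh p = biquad A p & uh q = biquad A q].
Proof.
move=> [[K [l [hK corner]]] [np nq]]; have [_ hy] := cell_proper hK.
have vertK w : is_corner K w -> is_vertex M w by exists K, l.
by case: corner => -[ep eq]; subst p q; split=> //; apply: uh_dof => //;
  apply: vertK; rewrite /is_corner; tauto.
Qed.

Lemma xterm_exact v gx : xterm M uh v gx -> gx = (grad_biquad A v).1.
Proof.
case: v => x y; have [c0 [c1 [c2 row]]] := biquad_row A y.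
rewrite (proj2 (row x)) /xterm /sig_x => -[|[|]].
- move=> [[p y1] [[q y2] [hl [hr ->]]]].
  have [/= ey1 px up uv] := hedge_interp hl.
  have [/= ey2 xq _ uq] := hedge_interp hr.
  subst; rewrite up uv uq /= !(proj1 (row _)).
  by apply: central_recovery_quad; rewrite lt_eqF // (lt_trans px).
- move=> [_ [[q y1] [[r y2] [hl [hr ->]]]]].
  have [/= ey1 xq uv uq] := hedge_interp hl.
  have [/= ey2 qr _ ur] := hedge_interp hr.
  subst; rewrite uv uq ur /= !(proj1 (row _)).
  by apply: forward_recovery_quad; rewrite lt_eqF // (lt_trans xq).
- move=> [_ [[r y1] [[p y2] [hl [hr ->]]]]].
  have [/= ey1 rp ur _] := hedge_interp hl.
  have [/= ey2 px up uv] := hedge_interp hr.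
  subst; rewrite ur up uv /= !(proj1 (row _)).
  by apply: backward_recovery_quad; rewrite lt_eqF // (lt_trans rp).
Qed.

Lemma yterm_exact v gy : yterm M uh v gy -> gy = (grad_biquad A v).2.
Proof.
case: v => x y; have [c0 [c1 [c2 col]]] := biquad_col A x.
rewrite (proj2 (col y)) /yterm /sig_y => -[|[|]].
- move=> [[x1 p] [[x2 q] [hl [hr ->]]]].
  have [/= ex1 py up uv] := vedge_interp hl.
  have [/= ex2 yq _ uq] := vedge_interp hr.
  subst; rewrite up uv uq /= !(proj1 (col _)).
  by apply: central_recovery_quad; rewrite lt_eqF // (lt_trans py).
- move=> [_ [[x1 q] [[x2 r] [hl [hr ->]]]]].
  have [/= ex1 yq uv uq] := vedge_interp hl.
  have [/= ex2 qr _ ur] := vedge_interp hr.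
  subst; rewrite uv uq ur /= !(proj1 (col _)).
  by apply: forward_recovery_quad; rewrite lt_eqF // (lt_trans yq).
- move=> [_ [[x1 r] [[x2 p] [hl [hr ->]]]]].
  have [/= ex1 rp ur _] := vedge_interp hl.
  have [/= ex2 py up uv] := vedge_interp hr.
  subst; rewrite ur up uv /= !(proj1 (col _)).
  by apply: backward_recovery_quad; rewrite lt_eqF // (lt_trans rp).
Qed.

End MeshEdges.

Theorem proposition1 (R : realFieldType) (M : qmesh R) (a : 'I_3 -> 'I_3 -> R)
    (uh : R * R -> R) :
  quadtree_partition M ->
  interpolant M (biquad a) uh ->
  forall v : R * R, is_vertex M v -> ~ hanging M v ->
  forall g : R * R, recovered M uh v g -> g = grad_biquad a v.
Proof.
move=> [wfM _] [_ uh_dof] v _ _ g [gx [gy [hx [hy ->]]]].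
rewrite (xterm_exact wfM uh_dof hx) (yterm_exact wfM uh_dof hy).
by case: (grad_biquad a v).
Qed.
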